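(* Let $G=(X\cup Y,E)$ be a $d$-regular bipartite graph, $c\ge 1$, $t>0$, and let $C\subseteq X\cup Y$ be a cut with $|\nabla(C)|\le td$. Put $A'=C\cap X$, $W'=C\cap Y$ and $S_X:=\{v\in X\setminus A' : |N(v)\setminus W'|\le 3ct\}$. Then every closed $t$-contracting set $A\subseteq X$ with $|A\mathbin{\triangle}A'|\le ct$ satisfies $A\setminus A'\subseteq S_X$.
   Context: $N(S)$ is the neighbourhood of a vertex set $S$. The value $|\nabla(C)|$ of a cut $C$ is the number of edges with exactly one endpoint in $C$. The closure of $A\subseteq X$ is $[A]:=\{x\in X: N(x)\subseteq N(A)\}$, $A$ is closed if $A=[A]$, and $A$ is $t$-contracting if $|N(A)|<|[A]|+t$. *)

From mathcomp Require Import all_boot all_order all_algebra.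
Set Implicit Arguments. Unset Strict Implicit. Unset Printing Implicit Defensive.

Section Graph.
Variables (T : finType) (adj : rel T).

Definition nbhd (S : {set T}) : {set T} :=
  [set y | [exists x in S, adj x y]].

Definition nbhd1 (v : T) : {set T} := [set y | adj v y].

(* |nabla(C)|: number of edges with exactly one endpoint in C; each such
   edge {u,v} is counted once as the ordered pair (u,v) with u in C, v notin C *)
Definition cut_size (C : {set T}) : nat :=
  #|[set p : T * T | [&& adj p.1 p.2, p.1 \in C & p.2 \notin C]]|.

Definition closure (X A : {set T}) : {set T} :=
  [set x in X | nbhd1 x \subset nbhd A].

Definition is_closed (X A : {set T}) : Prop := A = closure X A.

Definition bipartite_graph (X Y : {set T}) : Prop :=
  [/\ X :&: Y = set0, X :|: Y = [set: T],
      symmetric adj, irreflexive adj &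
      forall u v, adj u v -> (u \in X) && (v \in Y) || (u \in Y) && (v \in X)].

Definition regular (d : nat) : Prop := forall v : T, #|nbhd1 v| = d.

End Graph.

Section Num.
Import GRing.Theory Num.Theory.
Local Open Scope ring_scope.

Definition t_contracting (R : numDomainType) (T : finType) (adj : rel T)
  (X A : {set T}) (t : R) : Prop :=
  (#|nbhd adj A|%:R < #|closure adj X A|%:R + t).
End Num.

From mathcomp Require Import all_boot all_order all_algebra.
From mathcomp Require Import zify lra.
Import Order.TTheory GRing.Theory Num.Theory.
Set Implicit Arguments. Unset Strict Implicit. Unset Printing Implicit Defensive.

(* Fix v in A \ A' and let K = N(v) \ W'; we must show
   |K| <= 3ct.  For y in K, N(y) splits into a part in A', a part in A \ A'
   and a part outside A, so summing |N(y)| = d over K gives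
     |K| d <= e(K, A') + |K| |A \ A'| + sum_(y in K) |N(y) \ A|.
   Since A' <= C and K avoids C, e(K, A') <= |nabla(C)| <= td.  Since
   K <= N(A), double counting the edges between A and N(A) bounds the last
   sum by (|N(A)| - |A|) d, which is < td because A is closed and
   t-contracting.  With |A \ A'| <= ct this yields |K| (d - ct) < 2td, and
   an elementary inequality (using |K| <= d and c >= 1) forces |K| <= 3ct. *)

Section EdgeCounting.
Variables (T : finType) (adj : rel T).

Definition edges (S B : {set T}) : nat :=
  #|[set p : T * T | [&& p.1 \in S, p.2 \in B & adj p.1 p.2]]|.

Lemma edgesE (S B : {set T}) :
  edges S B = (\sum_(x in S) #|nbhd1 adj x :&: B|)%N.
Proof.
rewrite /edges -sum1_card (eq_bigl _ _ (fun p => in_set _ p)) /=.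
rewrite -(pair_big_dep (fun x => x \in S) (fun x y => (y \in B) && adj x y)
                       (fun _ _ => 1%N)) /=.
by apply: eq_bigr => x _; rewrite sum1_card; apply: eq_card => y; rewrite !inE andbC.
Qed.

Lemma edgesC (S B : {set T}) : symmetric adj -> edges S B = edges B S.
Proof.
move=> hsym; have swap_inj : injective (fun p : T * T => (p.2, p.1)).
  by move=> [x y] [x' y'] /= [-> ->].
rewrite /edges -(card_preimset _ swap_inj); apply: eq_card => -[x y].
by rewrite !inE /=; apply/and3P/and3P => -[? ? ?]; split; rewrite // hsym.
Qed.

Lemma edges_le_cut (S B C : {set T}) :
  S \subset C -> [disjoint B & C] -> (edges S B <= cut_size adj C)%N.
Proof.
move=> /subsetP sSC dBC; apply: subset_leq_card; apply/subsetP => -[x y].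
rewrite !inE /= => /and3P[xS yB axy].
by rewrite axy sSC //= (disjointFr dBC yB).
Qed.

Variable d : nat.
Hypotheses (hsym : symmetric adj) (hreg : regular adj d).

(* Double counting the edges between A and N(A): the neighbours of N(A)
   outside A number exactly (|N(A)| - |A|) d. *)
Lemma nbhd_excess (A : {set T}) :
  (\sum_(y in nbhd adj A) #|nbhd1 adj y :\: A| + #|A| * d = #|nbhd adj A| * d)%N.
Proof.
have edges_A : edges (nbhd adj A) A = (#|A| * d)%N.
  rewrite edgesC // edgesE -sum_nat_const; apply: eq_bigr => x xA.
  rewrite -(hreg x) (setIidPl _) //; apply/subsetP => y.
  by rewrite !inE => axy; apply/existsP; exists x; rewrite xA.
rewrite -edges_A edgesE addnC -big_split -sum_nat_const /=.
by apply: eq_bigr => y _; rewrite cardsID hreg.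
Qed.

Lemma neighbourhood_count (A A' C K : {set T}) :
  A' \subset C -> K \subset nbhd adj A -> [disjoint K & C] ->
  (#|K| * d + #|A| * d
     <= cut_size adj C + #|K| * #|A :\: A'| + #|nbhd adj A| * d)%N.
Proof.
move=> sA'C sKN dKC.
have split_nbhd y : (d <= #|nbhd1 adj y :&: A'| + #|A :\: A'|
                          + #|nbhd1 adj y :\: A|)%N.
  rewrite -(hreg y); apply: leq_trans (leq_add (leq_card_setU _ _) (leqnn _)).
  apply: leq_trans (leq_card_setU _ _); apply: subset_leq_card.
  apply/subsetP => x xN; rewrite !inE; rewrite inE in xN; rewrite xN /=.
  by case: (x \in A); case: (x \in A').
have sum_split : (\sum_(y in K) d <= \sum_(y in K) (#|nbhd1 adj y :&: A'|
                     + #|A :\: A'| + #|nbhd1 adj y :\: A|))%N.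
  by apply: leq_sum => y _; apply: split_nbhd.
rewrite !big_split /= !sum_nat_const in sum_split.
have cut_part : (\sum_(y in K) #|nbhd1 adj y :&: A'| <= cut_size adj C)%N.
  by rewrite -edgesE edgesC //; apply: edges_le_cut.
have excess_part : (\sum_(y in K) #|nbhd1 adj y :\: A| + #|A| * d
                      <= #|nbhd adj A| * d)%N.
  rewrite -(nbhd_excess A) leq_add2r big_mkcond [X in (_ <= X)%N]big_mkcond.
  apply: leq_sum => y _; case: ifP => // yK; by rewrite (subsetP sKN y yK).
lia.
Qed.

End EdgeCounting.

Lemma bipartite_adj_XY (T : finType) (adj : rel T) (X Y : {set T}) u v :
  bipartite_graph adj X Y -> adj u v -> u \in X -> v \in Y.
Proof.
move=> [hXY _ _ _ hbip] /hbip /orP[/andP[_ ->] // | /andP[uY _] uX].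
have : u \in X :&: Y by rewrite inE uX uY.
by rewrite hXY inE.
Qed.

Local Open Scope ring_scope.

(* The numerical conclusion: k = |K|, m = |A|, n = |N(A)|, a = |A \ A'|,
   cu = |nabla(C)|. *)
Lemma three_ct_bound (R : realFieldType) (k d m n a cu c t : R) :
  0 <= k -> k <= d -> 0 <= a -> a <= c * t -> 1 <= c -> 0 < t ->
  n < m + t -> cu <= t * d ->
  k * d + m * d <= cu + k * a + n * d -> k <= 3 * c * t.
Proof.
move=> k0 kd a0 act c1 t0 nm cud count; rewrite leNgt; apply/negP => hk.
have d0 : 0 <= d by lra.
have excess : n * d <= m * d + t * d by nra.
have ka : k * a <= k * (c * t) by nra.
have t_ct : t <= c * t by nra.
have d_ct : 0 < d - c * t by lra.
have lower : 3 * t * (d - c * t) < k * (d - c * t) by nra.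
have pos : 0 < t * (d - 3 * c * t) by apply: mulr_gt0; lra.
nra.
Qed.

Theorem claim1 (R : realFieldType) (T : finType) (adj : rel T)
  (X Y : {set T}) (d : nat) (c t : R) (C : {set T}) :
  bipartite_graph adj X Y ->
  regular adj d ->
  1 <= c -> 0 < t ->
  (cut_size adj C)%:R <= t * d%:R ->
  let A' := C :&: X in
  let W' := C :&: Y in
  let S_X := [set v in X :\: A' | (#|nbhd1 adj v :\: W'|)%:R <= 3 * c * t] in
  forall A : {set T},
    A \subset X ->
    is_closed adj X A ->
    t_contracting adj X A t ->
    (#|(A :\: A') :|: (A' :\: A)|)%:R <= c * t ->
    A :\: A' \subset S_X.
Proof.
move=> hbip hreg hc ht hcut A' W' S_X A sAX hcl hcon hdiff.
have hsym : symmetric adj by case: hbip.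
apply/subsetP => v; rewrite inE => /andP[vnA' vA].
have vX : v \in X by apply: (subsetP sAX).
rewrite inE inE vnA' vX /=.
set K := nbhd1 adj v :\: W'.
have sKN : K \subset nbhd adj A.
  by apply/subsetP => y; rewrite !inE => /andP[_ vy]; apply/existsP; exists v; rewrite vA.
have dKC : [disjoint K & C].
  apply/pred0P => y; rewrite /= !inE; apply/negP => /andP[/andP[yW vy] yC].
  by rewrite yC (bipartite_adj_XY hbip vy vX) in yW.
have count := neighbourhood_count hsym hreg (subsetIl C X) sKN dKC.
have hKd : (#|K| <= d)%N by rewrite -(hreg v) subset_leq_card // subsetDl.
have ha : #|A :\: A'|%:R <= c * t.
  by apply: le_trans hdiff; rewrite ler_nat subset_leq_card // subsetUl.
have hNA : #|nbhd adj A|%:R < #|A|%:R + t by rewrite {2}hcl.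
apply: (three_ct_bound (ler0n _ _) _ (ler0n _ _) ha hc ht hNA hcut).
- by rewrite ler_nat.
- by rewrite -!natrM -!natrD ler_nat.
Qed.
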